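(* Fix a sequence of matchings, two rounds $t_1 < t_2$, and the load vector $x^{(t_1)}$ at the end of round $t_1$. For any family of non-negative numbers $g^{(s)}_{u,v}$ ($[u:v]\in \mathbf{M}^{(s)}$, $t_1 +1 \leq s \leq t_2$), let $Z := \sum_{s=t_1+1}^{t_2} \sum_{[u:v] \in \mathbf{M}^{(s)}} g_{u,v}^{(s)} e_{u,v}^{(s)}$. Then $\mathbb{E}[Z]=0$ and for any $\delta > 0$, \[ \Pr\left[ \left| Z - \mathbb{E}[Z] \right| \geq \delta \right] \leq 2 \exp \left(- \frac{ \delta^2}{2 \sum_{s=t_1+1}^{t_2} \sum_{[u:v] \in \mathbf{M}^{(s)}} \left(g^{(s)}_{u,v}\right)^2 } \right). \]
   Context: Discrete protocol with random orientation on a graph $G=(V,E)$ with $n$ nodes and matchings $\mathbf{M}^{(s)}\subseteq E$: $x^{(s)}\in\mathbb{Z}^n$ is the load vector at the end of round $s$. For each $\{u,v\}\in\mathbf{M}^{(s)}$ an independent uniform $\Phi^{(s)}_{u,v}\in\{-1,1\}$ is drawn ($\Phi^{(s)}_{v,u}=-\Phi^{(s)}_{u,v}$); both nodes receive $\lfloor (x^{(s-1)}_u+x^{(s-1)}_v)/2\rfloor$ tokens and the excess token, if the sum is odd, goes to $u$ if $\Phi^{(s)}_{u,v}=1$ and to $v$ otherwise; unmatched nodes keep their load. The rounding error is $e^{(s)}_{u,v}=\frac12\,\mathsf{Odd}(x^{(s-1)}_u+x^{(s-1)}_v)\,\Phi^{(s)}_{u,v}$, where $\mathsf{Odd}(x)=x\bmod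 2$. $[u:v]\in\mathbf{M}^{(s)}$ means $\{u,v\}\in\mathbf{M}^{(s)}$ with $u<v$. The probability is over the orientations. *)

From HB Require Import structures.
From mathcomp Require Import all_boot all_order all_algebra.
From mathcomp Require Import reals.
From mathcomp.analysis Require Import sequences exp.
Set Implicit Arguments. Unset Strict Implicit. Unset Printing Implicit Defensive.
Import Order.TTheory GRing.Theory Num.Theory.
Local Open Scope ring_scope.

Definition is_matching (n : nat) (m : rel 'I_n) : Prop :=
  [/\ forall u v, m u v -> m v u,
      forall u, ~~ m u u &
      forall u v w, m u v -> m u w -> v = w].

(* Orientation variables for rounds t1+1 .. t1+k : for round t1+1+i (i : 'I_k)
   and ordered pair (u,v), [om i u v = true] means Phi_{u,v} = 1 (and false
   means Phi_{u,v} = -1). Only the entries with [u:v] in the matching of that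
   round (u < v) are used; the probability space is uniform over all such
   functions, so the used entries are i.i.d. uniform signs. *)
Definition Omega (n k : nat) := {ffun 'I_k -> {ffun 'I_n -> {ffun 'I_n -> bool}}}.

(* Orientation used in the j-th round after t1 (j = 0 is round t1+1). *)
Definition orient (n k : nat) (om : Omega n k) (j : nat) : 'I_n -> 'I_n -> bool :=
  match @insub nat (fun j => j < k)%N _ j with
  | Some i => fun u v => om i u v
  | None => fun _ _ => false
  end.

Definition step (n : nat) (m : rel 'I_n) (phi : 'I_n -> 'I_n -> bool)
  (x : 'I_n -> int) : 'I_n -> int :=
  fun w =>
    match [pick v | m w v] with
    | None => x w
    | Some v =>
        let u0 := if (w < v)%N then w else v in
        let v0 := if (w < v)%N then v else w in
        let sum := x u0 + x v0 in
        (sum %/ 2)%Z +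
        (if ((sum %% 2)%Z == 1) && ((w == u0) == phi u0 v0) then 1 else 0)
    end.

(* load M t1 x0 om j = x^{(t1 + j)} : the load vector at the end of round t1+j,
   starting from x^{(t1)} = x0 and using matchings M (t1+1), M (t1+2), ... *)
Fixpoint load (n k : nat) (M : nat -> rel 'I_n) (t1 : nat) (x0 : 'I_n -> int)
  (om : Omega n k) (j : nat) : 'I_n -> int :=
  match j with
  | 0 => x0
  | j'.+1 => step (M (t1 + j)%N) (orient om j') (load M t1 x0 om j')
  end.

(* Rounding error e^{(s)}_{u,v} for s = t1 + i + 1:
   (1/2) * Odd(x^{(s-1)}_u + x^{(s-1)}_v) * Phi^{(s)}_{u,v}. *)
Definition err {R : realType} (n k : nat) (M : nat -> rel 'I_n) (t1 : nat)
  (x0 : 'I_n -> int) (om : Omega n k) (i : nat) (u v : 'I_n) : R :=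
  let x := load M t1 x0 om i in
  2^-1 * (((x u + x v) %% 2)%Z)%:~R * (if orient om i u v then 1 else -1).

Definition Zsum {R : realType} (n k : nat) (M : nat -> rel 'I_n) (t1 : nat)
  (x0 : 'I_n -> int) (g : nat -> 'I_n -> 'I_n -> R) (om : Omega n k) : R :=
  \sum_(i < k) \sum_(u : 'I_n) \sum_(v : 'I_n | (u < v)%N && M (t1 + i.+1)%N u v)
     g (t1 + i.+1)%N u v * err M t1 x0 om i u v.

Definition Pr (R : realType) (n k : nat) (A : pred (Omega n k)) : R :=
  #|[set om | A om]|%:R / #|{: Omega n k}|%:R.

Definition Exp {R : realType} (n k : nat) (X : Omega n k -> R) : R :=
  (\sum_(om : Omega n k) X om) / #|{: Omega n k}|%:R.

(* Z is the sum of the martingale differences Y_i (round i's contribution), and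
   conditionally on the orientations of earlier rounds Y_i is a weighted sum of
   independent uniform signs with weights at most g/2 in absolute value.
   Hence E[Y_i | past] = 0, which gives E[Z] = 0, and a Hoeffding bound on the
   conditional moment generating function of each Y_i telescopes into
   E[exp(l Z)] <= exp(l^2 S / 2), S = sum of the g^2.  Chernoff's bound with
   l = delta / S applied to Z and -Z gives the tail estimate. *)
From HB Require Import structures.
From mathcomp Require Import all_boot all_order all_algebra.
From mathcomp Require Import reals.
From mathcomp.analysis Require Import sequences exp.
From mathcomp Require Import ring lra.
Import Order.TTheory GRing.Theory Num.Theory.
Local Open Scope ring_scope.
Set Implicit Arguments. Unset Strict Implicit. Unset Printing Implicit Defensive.

Section ResampleCoordinate.
Variables (I T : finType) (R : realType).

Definition upd (om : {ffun I -> T}) (i : I) (t : T) : {ffun I -> T} :=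
  [ffun j => if j == i then t else om j].

Lemma upd_id (om : {ffun I -> T}) i t : om i = t -> upd om i t = om.
Proof. by move=> <-; apply/ffunP => j; rewrite ffunE; case: eqP => [->|]. Qed.

Lemma upd_upd (om : {ffun I -> T}) i t t' : upd (upd om i t') i t = upd om i t.
Proof. by apply/ffunP => j; rewrite !ffunE; case: eqP. Qed.

Lemma sum_ffun_upd (h : {ffun I -> T} -> R) (i : I) (t0 : T) :
  \sum_om h om = \sum_(om : {ffun I -> T} | om i == t0) \sum_t h (upd om i t).
Proof.
rewrite (partition_big (fun om : {ffun I -> T} => om i) xpredT) //= exchange_big /=.
apply: eq_bigr => t _.
rewrite (reindex_onto (fun om => upd om i t) (fun om => upd om i t0)) /=; last first.
  by move=> om /eqP omi; rewrite upd_upd upd_id.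
apply: eq_bigl => om; rewrite ffunE eqxx eqxx /=.
apply/eqP/eqP => [<-|om_i]; first by rewrite ffunE eqxx.
by rewrite upd_upd upd_id.
Qed.

Lemma mulr_card_sum_ffun_upd (h : {ffun I -> T} -> R) (i : I) :
  #|T|%:R * \sum_om h om = \sum_om \sum_t h (upd om i t).
Proof.
have [om0 _|empty] := pickP (@predT {ffun I -> T}); last first.
  by rewrite !big_pred0 ?mulr0.
rewrite [RHS](sum_ffun_upd _ i (om0 i)) [in LHS](sum_ffun_upd _ i (om0 i)).
rewrite mulr_sumr; apply: eq_bigr => om _.
under [RHS]eq_bigr do under eq_bigr do rewrite upd_upd.
by rewrite sumr_const mulr_natl.
Qed.

Lemma sum_ffun_eq0_upd (h : {ffun I -> T} -> R) (i : I) :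
  (forall om, \sum_t h (upd om i t) = 0) -> \sum_om h om = 0.
Proof.
move=> h_upd; have [om0 _|empty] := pickP (@predT {ffun I -> T}); last first.
  by rewrite big_pred0.
have T_gt0 : (0 : R) < #|T|%:R by rewrite ltr0n; apply/card_gt0P; exists (om0 i).
apply: (mulfI (lt0r_neq0 T_gt0)).
by rewrite mulr0 (mulr_card_sum_ffun_upd _ i) big1.
Qed.

Lemma sum_ffun_mul_le_upd (a b : {ffun I -> T} -> R) (i : I) (B : R) :
  (forall om t, a (upd om i t) = a om) -> (forall om, 0 <= a om) ->
  (forall om, \sum_t b (upd om i t) <= #|T|%:R * B) ->
  \sum_om a om * b om <= B * \sum_om a om.
Proof.
move=> a_upd a_ge0 b_upd; have [om0 _|empty] := pickP (@predT {ffun I -> T}); last first.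
  by rewrite !big_pred0 ?mulr0.
have T_gt0 : (0 : R) < #|T|%:R by rewrite ltr0n; apply/card_gt0P; exists (om0 i).
rewrite -(ler_pM2l T_gt0) (mulr_card_sum_ffun_upd _ i) mulrA mulr_sumr.
apply: ler_sum => om _; under eq_bigr do rewrite a_upd.
by rewrite -mulr_sumr mulrC ler_wpM2r.
Qed.
End ResampleCoordinate.

Section ExpBounds.
Variable R : realType.

Lemma expR_le_quadratic (x : R) : `|x| <= 2^-1 -> expR x <= 1 + x + 2 * x ^+ 2.
Proof.
rewrite ler_norml => /andP[x_ge x_le].
have expRN_ge : 1 - x <= (expR x)^-1 by rewrite -expRN; exact: expR_ge1Dx.
have expR_gt0 := expR_gt0 x.
have : (1 - x) * expR x <= 1.
  by have := ler_wpM2r (ltW expR_gt0) expRN_ge; rewrite mulVf ?lt0r_neq0.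
nra.
Qed.

Lemma expR_addN_le (x : R) : expR x + expR (- x) <= 2 * expR (2 * x ^+ 2).
Proof.
have [x_small|x_large] := leP `|x| 2^-1.
  have := expR_le_quadratic x_small.
  have := @expR_le_quadratic (- x); rewrite normrN sqrrN => /(_ x_small).
  have := expR_ge1Dx (2 * x ^+ 2).
  lra.
have sqr_norm : `|x| ^+ 2 = x ^+ 2 by rewrite real_normK ?num_real.
have x_le := ler_norm x; have Nx_le : - x <= `|x| by rewrite -normrN ler_norm.
have : expR x <= expR (2 * x ^+ 2) by rewrite ler_expR; nra.
have : expR (- x) <= expR (2 * x ^+ 2) by rewrite ler_expR; nra.
lra.
Qed.

End ExpBounds.

Section RandomSigns.
Variables (R : realType) (I J : finType).
Local Notation F := {ffun I -> {ffun J -> bool}}.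

Definition sign (b : bool) : R := if b then 1 else -1.

Lemma sum_ffun_prod_bool (H : I -> J -> bool -> R) :
  \sum_(f : F) \prod_u \prod_v H u v (f u v) =
  \prod_u \prod_v (H u v true + H u v false).
Proof.
transitivity (\prod_u \sum_(h : {ffun J -> bool}) \prod_v H u v (h v)).
  by rewrite bigA_distr_bigA.
apply: eq_bigr => u _.
rewrite (eq_bigr (fun v => \sum_(b : bool) H u v b)) => [|v _]; last by rewrite big_bool.
by rewrite bigA_distr_bigA.
Qed.

Lemma card_sign_ffun : #|{: F}|%:R = \prod_(u : I) \prod_(v : J) (1 + 1) :> R.
Proof.
rewrite -(sum_ffun_prod_bool (fun _ _ _ => 1)) -sumr_const.
by apply: eq_bigr => f _; rewrite !big1.
Qed.

Lemma sum_sign_eq0 (u : I) (v : J) : \sum_(f : F) sign (f u v) = 0.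
Proof.
pose H u' v' (b : bool) := if (u' == u) && (v' == v) then sign b else 1.
transitivity (\sum_(f : F) \prod_u' \prod_v' H u' v' (f u' v')).
  apply: eq_bigr => f _.
  rewrite (bigD1 u) //= [X in _ * X]big1 => [|u' /negbTE u'_neq]; last first.
    by rewrite big1 // => v' _; rewrite /H u'_neq.
  rewrite (bigD1 v) //= [X in _ * X * _]big1 => [|v' /negbTE v'_neq].
    by rewrite /H !eqxx !mulr1.
  by rewrite /H eqxx v'_neq.
rewrite sum_ffun_prod_bool (bigD1 u) //= (bigD1 v) //= /H !eqxx /sign.
by rewrite subrr !mul0r.
Qed.

Lemma sum_signed_eq0 (P : I -> J -> bool) (a : I -> J -> R) :
  \sum_(f : F) \sum_u \sum_(v | P u v) a u v * sign (f u v) = 0.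
Proof.
rewrite exchange_big big1 // => u _; rewrite exchange_big big1 // => v _.
by rewrite -mulr_sumr sum_sign_eq0 mulr0.
Qed.

Lemma sum_expR_signed_le (P : I -> J -> bool) (a : I -> J -> R) (l : R) :
  \sum_(f : F) expR (l * \sum_u \sum_(v | P u v) a u v * sign (f u v)) <=
  #|{: F}|%:R * expR (2 * l ^+ 2 * \sum_u \sum_(v | P u v) a u v ^+ 2).
Proof.
pose H u v (b : bool) := expR (if P u v then l * (a u v * sign b) else 0).
rewrite (eq_bigr (fun f : F => \prod_u \prod_v H u v (f u v))); last first.
  move=> f _; rewrite mulr_sumr expR_sum; apply: eq_bigr => u _.
  rewrite mulr_sumr big_mkcond expR_sum /=; apply: eq_bigr => v _.
  by rewrite /H; case: (P u v).
rewrite sum_ffun_prod_bool card_sign_ffun mulr_sumr expR_sum -big_split /=.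
apply: ler_prod => u _; apply/andP; split.
  by apply: prodr_ge0 => v _; rewrite addr_ge0 // expR_ge0.
rewrite mulr_sumr [X in _ <= _ * expR X]big_mkcond expR_sum -big_split /=.
apply: ler_prod => v _; apply/andP; split; first by rewrite addr_ge0 // expR_ge0.
rewrite /H /sign; case: (P u v); last by rewrite expR0; lra.
have := expR_addN_le (l * a u v).
by rewrite mulr1 mulrN1 mulrN exprMn mulrA.
Qed.

End RandomSigns.

Lemma modz2_itv (R : realType) (z : int) : 0 <= (((z %% 2)%Z)%:~R : R) <= 1.
Proof.
by rewrite ler0z lerz1 modz_ge0 //= -ltzD1 ltz_pmod.
Qed.

Section ChernoffTail.
Variables (R : realType) (T : finType).

Lemma card_le_sum (P : pred T) (w : T -> R) :
  (forall x, 0 <= w x) -> (forall x, P x -> 1 <= w x) ->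
  #|[set x | P x]|%:R <= \sum_x w x.
Proof.
move=> w_ge0 w_ge1; rewrite (bigID P) /= -[leLHS]addr0 lerD ?sumr_ge0 //.
by rewrite cardsE -sumr_const ler_sum.
Qed.

Lemma one_le_expR_tail (l d z : R) : 0 <= l -> d <= `|z| ->
  1 <= expR (l * z - l * d) + expR (- l * z - l * d).
Proof.
move=> l_ge0; rewrite ler_normr => /orP[d_le|d_le].
  have := expR_ge1Dx (l * z - l * d); have := expR_ge0 (- l * z - l * d).
  have : 0 <= l * (z - d) by rewrite mulr_ge0 // subr_ge0.
  lra.
have := expR_ge1Dx (- l * z - l * d); have := expR_ge0 (l * z - l * d).
have : 0 <= l * (- z - d) by rewrite mulr_ge0 // subr_ge0.
lra.
Qed.

Lemma card_abs_ge_le (X : T -> R) (S delta : R) : 0 < delta -> 0 <= S ->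
  (forall l, \sum_x expR (l * X x) <= #|T|%:R * expR (l ^+ 2 / 2 * S)) ->
  #|[set x | delta <= `|X x|]|%:R <= 2 * expR (- (delta ^+ 2 / (2 * S))) * #|T|%:R.
Proof.
move=> delta_gt0; rewrite le_eqVlt => /orP[/eqP <-|S_gt0] mgf.
  (* S = 0: since x / 0 = 0 the bound degenerates to 2 * #|T|. *)
  rewrite mulr0 invr0 mulr0 oppr0 expR0 mulr1 mulr_natl mulr2n -[leLHS]addr0.
  by rewrite lerD ?ler_nat ?max_card.
pose l := delta / S.
have l_ge0 : 0 <= l by rewrite divr_ge0 ?ltW.
apply: le_trans (card_le_sum (w := fun x => expR (l * X x - l * delta) +
                                            expR (- l * X x - l * delta)) _ _) _.
- by move=> x; rewrite addr_ge0 ?expR_ge0.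
- by move=> x /one_le_expR_tail; apply.
under eq_bigr do rewrite !expRD.
rewrite big_split -!mulr_suml /=.
have -> : - (delta ^+ 2 / (2 * S)) = l ^+ 2 / 2 * S - l * delta.
  by rewrite /l; field; rewrite gt_eqF.
rewrite expRD -mulrDl.
have := mgf l; have := mgf (- l); rewrite sqrrN.
have := expR_ge0 (- (l * delta)); have := expR_ge0 (l ^+ 2 / 2 * S).
nra.
Qed.

End ChernoffTail.

Section Protocol.
Variables (R : realType) (n k : nat) (M : nat -> rel 'I_n) (t1 : nat)
  (x0 : 'I_n -> int) (g : nat -> 'I_n -> 'I_n -> R).
Local Notation F := {ffun 'I_n -> {ffun 'I_n -> bool}}.
Local Notation load := (load M t1 x0).

Lemma orient_ord (om : Omega n k) (i : 'I_k) u v : orient om i u v = om i u v.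
Proof. by rewrite /orient valK. Qed.

Lemma eq_orient (om om' : Omega n k) j :
  (forall i : 'I_k, i = j :> nat -> om i = om' i) -> orient om j = orient om' j.
Proof. by rewrite /orient; case: insubP => [i _ i_eq eq_om|//]; rewrite eq_om. Qed.

Lemma eq_load (om om' : Omega n k) j :
  (forall i : 'I_k, (i < j)%N -> om i = om' i) -> load om j = load om' j.
Proof.
elim: j => [//|j IHj] eq_om /=.
rewrite IHj => [|i /ltnW]; last exact: eq_om.
by rewrite (@eq_orient om om' j) // => i i_eq; apply: eq_om; rewrite i_eq.
Qed.

Definition Zround (i : nat) (om : Omega n k) : R :=
  \sum_(u : 'I_n) \sum_(v : 'I_n | (u < v)%N && M (t1 + i.+1)%N u v)
     g (t1 + i.+1)%N u v * err M t1 x0 om i u v.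

Definition round_sqsum (i : nat) : R :=
  \sum_(u : 'I_n) \sum_(v : 'I_n | (u < v)%N && M (t1 + i.+1)%N u v)
     g (t1 + i.+1)%N u v ^+ 2.

Definition parity (om : Omega n k) (i : nat) (u v : 'I_n) : R :=
  (((load om i u + load om i v) %% 2)%Z)%:~R.

Lemma Zsum_round : Zsum M t1 x0 g =1 fun om => \sum_(i < k) Zround i om.
Proof. by []. Qed.

Lemma eq_Zround (i : nat) (om om' : Omega n k) :
  (forall j : 'I_k, (j <= i)%N -> om j = om' j) -> Zround i om = Zround i om'.
Proof.
move=> eq_om; rewrite /Zround /err (@eq_load om om' i) => [|j /ltnW]; last exact: eq_om.
by rewrite (@eq_orient om om' i) // => j j_eq; apply: eq_om; rewrite j_eq.
Qed.

Lemma Zround_upd (i : 'I_k) (om : Omega n k) (f : F) :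
  Zround i (upd om i f) =
  \sum_(u : 'I_n) \sum_(v : 'I_n | (u < v)%N && M (t1 + i.+1)%N u v)
     (g (t1 + i.+1)%N u v * 2^-1 * parity om i u v) * sign R (f u v).
Proof.
rewrite /Zround /err /parity (@eq_load (upd om i f) om i) => [|j j_lt]; last first.
  by rewrite ffunE; case: eqP => // j_eq; rewrite j_eq ltnn in j_lt.
apply: eq_bigr => u _; apply: eq_bigr => v _.
by rewrite orient_ord ffunE eqxx !mulrA.
Qed.

Lemma sum_Zround_upd_eq0 (i : 'I_k) (om : Omega n k) :
  \sum_(f : F) Zround i (upd om i f) = 0.
Proof. under eq_bigr do rewrite Zround_upd; exact: sum_signed_eq0. Qed.

Lemma sum_expR_Zround_upd_le (i : 'I_k) (om : Omega n k) (l : R) :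
  \sum_(f : F) expR (l * Zround i (upd om i f)) <=
  #|{: F}|%:R * expR (l ^+ 2 / 2 * round_sqsum i).
Proof.
under eq_bigr do rewrite Zround_upd.
apply: le_trans (sum_expR_signed_le _ _ _) _.
rewrite ler_wpM2l // ler_expR /round_sqsum !mulr_sumr; apply: ler_sum => u _.
rewrite !mulr_sumr; apply: ler_sum => v _.
have /andP[p_ge0 p_le1] : 0 <= parity om i u v <= 1 := modz2_itv _ _.
set c := g _ u v; set p := parity om i u v.
(* The factor 1/2 in the rounding error absorbs the constant 2 of expR_addN_le. *)
have -> : 2 * l ^+ 2 * (c * 2^-1 * p) ^+ 2 = (l ^+ 2 / 2 * c ^+ 2) * p ^+ 2 by field.
apply: ler_piMr; last exact: exprn_ile1.
by rewrite mulr_ge0 ?divr_ge0 ?sqr_ge0.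
Qed.

Lemma sum_Zround_eq0 (i : 'I_k) : \sum_(om : Omega n k) Zround i om = 0.
Proof. by apply: (sum_ffun_eq0_upd (i := i)) => om; exact: sum_Zround_upd_eq0. Qed.

Lemma sum_expR_Zpartial_le (l : R) m : (m <= k)%N ->
  \sum_(om : Omega n k) expR (l * \sum_(i < m) Zround i om) <=
  #|{: Omega n k}|%:R * expR (l ^+ 2 / 2 * \sum_(i < m) round_sqsum i).
Proof.
elim: m => [_|m IHm m_lt].
  under eq_bigr do rewrite big_ord0 mulr0 expR0.
  by rewrite big_ord0 mulr0 expR0 mulr1 sumr_const.
pose A om := expR (l * \sum_(i < m) Zround i om).
have A_upd om f : A (upd om (Ordinal m_lt) f) = A om.
  congr (expR (l * _)); apply: eq_bigr => i _; apply: eq_Zround => j j_le.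
  rewrite ffunE; case: eqP => // j_eq.
  by move: (leq_ltn_trans j_le (ltn_ord i)); rewrite j_eq /= ltnn.
under eq_bigr do rewrite big_ord_recr mulrDr expRD /=.
apply: le_trans (sum_ffun_mul_le_upd (a := A) A_upd _ _) _.
- by move=> om; exact: expR_ge0.
- by move=> om; exact: (sum_expR_Zround_upd_le (Ordinal m_lt)).
rewrite mulrC (le_trans (ler_wpM2r (expR_ge0 _) (IHm (ltnW m_lt)))) //.
by rewrite -[leLHS]mulrA -expRD -mulrDr big_ord_recr.
Qed.

End Protocol.

Theorem lemma2p12 (R : realType) (n : nat) (E : rel 'I_n)
  (M : nat -> rel 'I_n) (t1 t2 : nat) (x0 : 'I_n -> int)
  (g : nat -> 'I_n -> 'I_n -> R) :
  (t1 < t2)%N ->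
  (forall s, is_matching (M s)) ->
  (forall s (u v : 'I_n), M s u v -> E u v) ->
  (forall s (u v : 'I_n), (t1 < s <= t2)%N -> (u < v)%N -> M s u v -> 0 <= g s u v) ->
  let Z := @Zsum R n (t2 - t1)%N M t1 x0 g in
  Exp Z = 0 /\
  forall delta : R, 0 < delta ->
    Pr R (fun om => delta <= `|Z om - Exp Z|) <=
    2 * expR (- (delta ^+ 2 /
      (2 * \sum_(i < t2 - t1) \sum_(u : 'I_n)
             \sum_(v : 'I_n | (u < v)%N && M (t1 + i.+1)%N u v)
               g (t1 + i.+1)%N u v ^+ 2))).
Proof.
move=> _ _ _ _ Z.
have Exp_Z : Exp Z = 0.
  rewrite /Exp (eq_bigr _ (fun om _ => Zsum_round M t1 x0 g om)) exchange_big.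
  by rewrite big1 ?mul0r // => i _; exact: sum_Zround_eq0.
split=> // delta delta_gt0; rewrite Exp_Z /Pr ler_pdivrMr; last first.
  by rewrite ltr0n; apply/card_gt0P; exists [ffun _ => [ffun _ => [ffun _ => false]]].
apply: card_abs_ge_le => // [|l].
  by do 3![apply: sumr_ge0 => ? _]; exact: sqr_ge0.
under eq_bigr do rewrite subr0.
exact: sum_expR_Zpartial_le.
Qed.
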